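(* For coalescing random walks on a finite Markov chain and any $M\in\mathbb Z_+$ and $t\ge0$, \[\mathbb{E}(N_t^{-1}\mathbf 1[N_t\ge M])=\mathbb P(n_t\ge M)\quad\text{and}\quad\mathbb{E}(N_t^{-1}\mathbf 1[N_t\le M])=\mathbb P(0<n_t\le M).\]
   Context: $(V,\mathbf r)$ is a continuous-time irreducible Markov chain on a finite set $V$, $|V|=n$, with symmetric rates. Coalescing random walks via the graphical representation (directed edge $(x,y)$ rings at rate $r_{x,y}$, moving any particle at $x$ to $y$); $X_1,\dots,X_n$ are the paths of the particles started at the $n$ states; $\mathcal C(P,Q)=\inf\{t:P(t)=Q(t)\}$; with $\iota$ uniform on $\{1,\dots,n\}$, $N_t:=|\{i:\mathcal C(X_i,X_\iota)\le t\}|$. Voter model: initially all voters have distinct opinions; at rate $r_{x,y}$ voter $y$ adopts the opinion of $x$. $\zeta^x_t$ is the set of voters whose opinion at time $t$ equals the initial opinion of $x$, and $n_t:=|\zeta^{\mathcal U}_t|$ with $\mathcal U$ uniform on $V$ and independent of the voter model. *)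

From HB Require Import structures.
From mathcomp Require Import all_boot all_order all_algebra.
From mathcomp Require Import all_classical all_reals all_analysis.
Set Implicit Arguments. Unset Strict Implicit. Unset Printing Implicit Defensive.
Import Order.TTheory GRing.Theory Num.Theory.
Local Open Scope ring_scope.

(* Graphical representation on the time window [0,t]: only the time-ordered
   sequence s = [:: e_1; ...; e_k] of directed edges e = (x,y) that ring in
   [0,t] matters for both processes.  For independent Poisson clocks of rates
   r_{x,y}, P(the ordered sequence of rings in [0,t] is exactly s)
     = exp(-lambda t) t^k / k! * prod_i r_{e_i},  lambda = sum_{x,y} r_{x,y}. *)

Section Defs.
Variable V : finType.

Definition crw_step (e : V * V) (p : V) : V := if p == e.1 then e.2 else p.
Definition crw_pos (s : seq (V * V)) (i : V) : V :=
  foldl (fun p e => crw_step e p) i s.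
Definition coalesced_by (s : seq (V * V)) (i j : V) : bool :=
  [exists k : 'I_(size s).+1, crw_pos (take k s) i == crw_pos (take k s) j].
(* N_t given the rings s and the tagged particle iota *)
Definition N_of (s : seq (V * V)) (iota : V) : nat :=
  #|[set i | coalesced_by s i iota]|.

(* voter model: ring of (x,y) makes voter y adopt the opinion of x;
   voter_state s y = the voter whose initial opinion y holds after s *)
Definition voter_step (e : V * V) (op : V -> V) : V -> V :=
  fun y => if y == e.2 then op e.1 else op y.
Definition voter_state (s : seq (V * V)) : V -> V :=
  foldl (fun op e => voter_step e op) id s.
Definition zeta (s : seq (V * V)) (x : V) : {set V} :=
  [set y | voter_state s y == x].
(* n_t given the rings s and the uniform voter U = u *)
Definition n_of (s : seq (V * V)) (u : V) : nat := #|zeta s u|.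

Variable R : realType.

Definition total_rate (r : V -> V -> R) : R := \sum_(e : V * V) r e.1 e.2.

Definition ring_law (r : V -> V -> R) (t : R) (s : seq (V * V)) : R :=
  expR (- (total_rate r * t)) * t ^+ size s / (size s)`!%:R
  * \prod_(e <- s) r e.1 e.2.

(* expectation of f(rings in [0,t], W) with W uniform on V, independent *)
Definition Egr (r : V -> V -> R) (t : R) (f : seq (V * V) -> V -> R) : \bar R :=
  (\sum_(0 <= k <oo)
     ((\sum_(s : k.-tuple (V * V))
         ring_law r t s * (#|V|%:R^-1 * \sum_(w : V) f s w))%:E))%E.

Definition irreducible_rates (r : V -> V -> R) : Prop :=
  forall x y : V, connect [rel a b | 0 < r a b] x y.

End Defs.

From HB Require Import structures.
From mathcomp Require Import all_boot all_order all_algebra.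
From mathcomp Require Import all_classical all_reals all_analysis.
Import Order.TTheory GRing.Theory Num.Theory.
Local Open Scope ring_scope.

(* Read backwards in time and with every edge reversed, the rings driving the
   voter model drive the coalescing walks: the voter whose initial opinion y
   holds at time t is the position at time t of the walker started at y.  For
   symmetric rates this time reversal preserves the law of the rings, so
   n_t(u) may be computed as the number of walkers sitting at u.  Since
   coalescence is permanent, N_t(i) is the number of walkers sharing the final
   position of walker i; averaging 1/N_t(i) over i therefore counts every
   occupied site once, which turns E(N_t^-1 phi(N_t)) into P(n_t > 0, phi(n_t)). *)

Section TimeReversal.
Variable T : Type.

Definition reverse_edge (e : T * T) : T * T := (e.2, e.1).

Definition time_reversal (s : seq (T * T)) : seq (T * T) :=
  rev (map reverse_edge s).

Lemma time_reversalK : involutive time_reversal.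
Proof.
move=> s; rewrite /time_reversal map_rev revK -map_comp.
by rewrite (@eq_map _ _ _ id) ?map_id //; case.
Qed.

End TimeReversal.

Arguments time_reversal {T} s.

Section Duality.
Variable V : finType.

Lemma crw_pos_cat (s1 s2 : seq (V * V)) (i : V) :
  crw_pos (s1 ++ s2) i = crw_pos s2 (crw_pos s1 i).
Proof. by rewrite /crw_pos foldl_cat. Qed.

Lemma coalesced_byE (s : seq (V * V)) (i j : V) :
  coalesced_by s i j = (crw_pos s i == crw_pos s j).
Proof.
apply/existsP/eqP => [[k /eqP meet_k] | meet_end].
  by rewrite -(cat_take_drop k s) !crw_pos_cat meet_k.
by exists ord_max; rewrite /= take_size meet_end.
Qed.

Lemma voter_state_time_reversal (s : seq (V * V)) :
  voter_state (time_reversal s) =1 crw_pos s.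
Proof.
elim: s => [// | e s IHs] y.
rewrite /time_reversal /= rev_cons /voter_state foldl_rcons.
rewrite -/(voter_state (time_reversal s)) /voter_step /= !IHs.
by rewrite /crw_pos /= /crw_step; case: eqP.
Qed.

Lemma N_ofE (s : seq (V * V)) (i : V) :
  N_of s i = #|[set j | crw_pos s j == crw_pos s i]|.
Proof. by apply: eq_card => j; rewrite !inE coalesced_byE. Qed.

Lemma n_of_time_reversal (s : seq (V * V)) (u : V) :
  n_of (time_reversal s) u = #|[set j | crw_pos s j == u]|.
Proof. by apply: eq_card => j; rewrite !inE voter_state_time_reversal. Qed.

End Duality.

Lemma sum_inv_card_fibre (R : numFieldType) (T U : finType) (p : T -> U)
    (phi : nat -> R) :
  \sum_i #|[set j | p j == p i]|%:R^-1 * phi #|[set j | p j == p i]|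
  = \sum_u (0 < #|[set j | p j == u]|)%:R * phi #|[set j | p j == u]|.
Proof.
rewrite (partition_big p predT) //=; apply: eq_bigr => u _.
set c := #|[set j | p j == u]|.
rewrite (eq_bigr (fun=> c%:R^-1 * phi c)); last by move=> i /eqP->.
rewrite sumr_const (_ : #|_| = c); last by apply: eq_card => i; rewrite inE.
have [-> | c_gt0] := posnP c; first by rewrite !mulr0n mul0r.
have c_neq0 : c%:R != 0 :> R by rewrite pnatr_eq0 -lt0n.
by rewrite mul1r -mulrnAl -mulr_natr mulVf ?mul1r.
Qed.

Section TimeReversalInvariance.
Variables (R : realType) (V : finType) (r : V -> V -> R) (t : R).
Hypothesis r_sym : forall x y : V, r x y = r y x.

Lemma ring_law_time_reversal (s : seq (V * V)) :
  ring_law r t (time_reversal s) = ring_law r t s.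
Proof.
rewrite /ring_law /time_reversal size_rev size_map big_rev big_map.
by congr (_ * _); apply: eq_bigr => e _; rewrite r_sym.
Qed.

Lemma Egr_eq_sum (f g : seq (V * V) -> V -> R) :
  (forall s, \sum_w f s w = \sum_w g s w) -> Egr r t f = Egr r t g.
Proof.
move=> fg; apply: eq_eseriesr => k _; congr (_%:E).
by apply: eq_bigr => s _; rewrite fg.
Qed.

Lemma Egr_time_reversal (f : seq (V * V) -> V -> R) :
  Egr r t (fun s => f (time_reversal s)) = Egr r t f.
Proof.
apply: eq_eseriesr => k _; congr (_%:E).
pose reverse_tuple (s : k.-tuple (V * V)) :=
  rev_tuple (map_tuple (@reverse_edge V) s).
have reverse_tupleK : involutive reverse_tuple.
  by move=> s; apply: val_inj; exact: time_reversalK.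
rewrite [RHS](reindex_inj (can_inj reverse_tupleK)).
by apply: eq_bigr => s _; rewrite -ring_law_time_reversal.
Qed.

Lemma Egr_eq_sum_time_reversal (f g : seq (V * V) -> V -> R) :
  (forall s, \sum_w f s w = \sum_w g (time_reversal s) w) ->
  Egr r t f = Egr r t g.
Proof. by move=> fg; rewrite -(Egr_time_reversal g); apply: Egr_eq_sum. Qed.

End TimeReversalInvariance.

Theorem corollary2p2 (R : realType) (V : finType) (r : V -> V -> R)
    (M : nat) (t : R) :
  (0 < #|V|)%N ->
  (forall x y : V, 0 <= r x y) ->
  (forall x y : V, r x y = r y x) ->
  irreducible_rates r ->
  (0 < M)%N -> 0 <= t ->
  Egr r t (fun s i => (N_of s i)%:R^-1 * (M <= N_of s i)%N%:R)
    = Egr r t (fun s u => (M <= n_of s u)%N%:R)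
  /\
  Egr r t (fun s i => (N_of s i)%:R^-1 * (N_of s i <= M)%N%:R)
    = Egr r t (fun s u => ((0 < n_of s u) && (n_of s u <= M))%N%:R).
Proof.
move=> _ _ r_sym _ M_gt0 _.
split; apply: Egr_eq_sum_time_reversal => // s;
  under eq_bigr do rewrite N_ofE.
- rewrite (@sum_inv_card_fibre _ _ _ _ (fun n => (M <= n)%N%:R)).
  apply: eq_bigr => u _; rewrite n_of_time_reversal -natrM mulnb andb_idl //.
  exact: leq_trans.
- rewrite (@sum_inv_card_fibre _ _ _ _ (fun n => (n <= M)%N%:R)).
  by apply: eq_bigr => u _; rewrite n_of_time_reversal -natrM mulnb.
Qed.
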